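(* Let $\mu>0$, $\Omega\subseteq\Lambda$, and $V:\Omega\to\mathbb{R}$ with $\frac12\mu\le V(x)\le\mu$ for all $x\in\Omega$. Let $\chi=\mathbb{1}[-\Delta_\Omega-V<0]$ (spectral projection on $\mathbb{C}^\Omega$) and $\rho_\chi(x)=\chi_{x,x}$. Then for every $x\in\Omega$ and every $\beta>0$, $$\rho_\chi(x)\ \ge\ e^{-\beta\mu/2}\Big[\big(e^{\beta\Delta_\Omega}\big)_{x,x}-e^{-\beta\mu/2}\Big].$$
   Context: $\Lambda=\mathbb{Z}_L^d$; $T_{x,y}=1$ if $|x-y|_1=1$, else $0$; $\Delta_{x,y}=T_{x,y}-2d\delta_{x,y}$; $\Delta_\Omega=P_\Omega\Delta P_\Omega$ regarded as an operator on $\mathbb{C}^\Omega$; $V$ acts as a diagonal multiplication operator. *)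

From HB Require Import structures.
From mathcomp Require Import all_boot all_order all_algebra.
From mathcomp Require Import all_classical all_reals all_analysis.
Set Implicit Arguments. Unset Strict Implicit. Unset Printing Implicit Defensive.
Import Order.TTheory GRing.Theory Num.Theory.
Local Open Scope ring_scope.

(* Sites of the discrete torus Lambda = Z_L^d. *)
Definition site (d L : nat) : finType := {ffun 'I_d -> 'I_L}.

Definition cdist (L : nat) (a b : 'I_L) : nat :=
  let m := if (a <= b)%N then (b - a)%N else (a - b)%N in minn m (L - m).

Definition l1dist (d L : nat) (x y : site d L) : nat :=
  (\sum_(k < d) cdist (x k) (y k))%N.

Section Ops.
Variables (R : realType) (d L : nat).

Definition Tmat (x y : site d L) : R := if l1dist x y == 1%N then 1 else 0.
Definition Lap (x y : site d L) : R := Tmat x y - (2 * d)%:R * (x == y)%:R.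

Definition Osite (Om : {set site d L}) (i : 'I_#|Om|) : site d L := enum_val i.

(* Delta_Omega = P_Omega Delta P_Omega as an operator on functions on Omega. *)
Definition LapOm (Om : {set site d L}) : 'M[R]_#|Om| :=
  \matrix_(i, j) Lap (Osite i) (Osite j).

Definition HOm (Om : {set site d L}) (V : site d L -> R) : 'M[R]_#|Om| :=
  - LapOm Om - diag_mx (\row_i V (Osite i)).
End Ops.

Definition spectral_decomp (R : realType) (n : nat) (A U : 'M[R]_n) (lam : 'I_n -> R) : Prop :=
  U *m U^T = 1%:M /\ A = U *m diag_mx (\row_k lam k) *m U^T.

Definition fcalc (R : realType) (n : nat) (U : 'M[R]_n) (lam : 'I_n -> R) (f : R -> R) : 'M[R]_n :=
  U *m diag_mx (\row_k f (lam k)) *m U^T.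

Definition ind_neg (R : realType) (t : R) : R := if t < 0 then 1 else 0.

From HB Require Import structures.
From mathcomp Require Import all_boot all_order all_algebra.
From mathcomp Require Import all_classical all_reals all_analysis.
From mathcomp Require Import ring lra zify.
Import Order.TTheory GRing.Theory Num.Theory numFieldNormedType.Exports.
Local Open Scope ring_scope.
Local Open Scope classical_set_scope.
Set Implicit Arguments. Unset Strict Implicit.

(* The spectrum of [H = -Delta_Omega - V] lies in [[-mu, oo)], since [-Delta_Omega >= 0]
   and [V <= mu].  On that half-line [1[t < 0] >= e^(-beta mu) (e^(-beta t) - 1)], so
   [chi_xx >= e^(-beta mu) ((e^(-beta H))_xx - 1)].  After a common shift by [2d], both
   [-H = Delta_Omega + V] and [Delta_Omega + mu/2] become entrywise nonnegative and the
   first dominates the second, because [V >= mu/2]; comparing the exponential series term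
   by term gives [(e^(-beta H))_xx >= e^(beta mu/2) (e^(beta Delta_Omega))_xx]. *)

Section FunctionalCalculus.
Variables (R : realType) (n : nat).
Implicit Types (A B U : 'M[R]_n) (lam : 'I_n -> R) (f g : R -> R).

Lemma fcalc_diag U lam f i : fcalc U lam f i i = \sum_k U i k ^+ 2 * f (lam k).
Proof. by rewrite mxE; apply: eq_bigr => k _; rewrite mul_mx_diag !mxE; ring. Qed.

Lemma row_norm1 U i : U *m U^T = 1%:M -> \sum_k U i k ^+ 2 = 1.
Proof.
move/(congr1 (fun M : 'M[R]_n => M i i)); rewrite /= !mxE eqxx mulr1n => <-.
by apply: eq_bigr => k _; rewrite mxE expr2.
Qed.

Lemma fcalc_diag_affine U lam f a b i : U *m U^T = 1%:M ->
  fcalc U lam (fun t => a * f t + b) i i = a * fcalc U lam f i i + b.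
Proof.
move=> hU; rewrite !fcalc_diag -[X in _ + X]mulr1 -(row_norm1 i hU) !mulr_sumr -big_split.
by apply: eq_bigr => k _; rewrite mulrDr; congr (_ + _); ring.
Qed.

Lemma fcalc_diag_le U lam f g i :
  (forall k, f (lam k) <= g (lam k)) -> fcalc U lam f i i <= fcalc U lam g i i.
Proof.
by move=> fg; rewrite !fcalc_diag; apply: ler_sum => k _; apply: ler_wpM2l; rewrite ?sqr_ge0.
Qed.

Lemma spectral_decomp_affine A U lam a b : spectral_decomp A U lam ->
  spectral_decomp (a *: A + b%:M) U (fun k => a * lam k + b).
Proof.
move=> [hU ->]; split=> //.
have -> : diag_mx (\row_k (a * lam k + b)) = a *: diag_mx (\row_k lam k) + b%:M.
  by apply/matrixP => p q; rewrite !mxE; case: eqP => [->|_] /=; rewrite ?mulr1n ?mulr0n; ring.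
rewrite mulmxDr mulmxDl -scalemxAr -scalemxAl mul_mx_scalar -scalemxAl hU.
by rewrite scalemx1.
Qed.

Lemma spectral_eigval A U lam k : spectral_decomp A U lam ->
  lam k = \sum_i \sum_j U i k * A i j * U j k.
Proof.
move=> [/mulmx1C hU hA].
have <- : (U^T *m A *m U) k k = lam k.
  by rewrite hA !mulmxA hU mul1mx -mulmxA hU mulmx1 !mxE eqxx mulr1n.
rewrite mxE exchange_big /=; apply: eq_bigr => i _; rewrite mxE mulr_suml.
by apply: eq_bigr => j _; rewrite !mxE.
Qed.

Lemma spectral_eigval_ge A U lam m :
  (forall u : 'I_n -> R, m * \sum_i u i ^+ 2 <= \sum_i \sum_j u i * A i j * u j) ->
  spectral_decomp A U lam -> forall k, m <= lam k.
Proof.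
move=> hq hA k; rewrite (spectral_eigval k hA).
have := hq (U ^~ k); suff -> : \sum_i U i k ^+ 2 = 1 by rewrite mulr1.
case: hA => /mulmx1C hU _.
have hUT : U^T *m U^T^T = 1%:M by rewrite trmxK.
rewrite -(row_norm1 k hUT).
by apply: eq_bigr => i _; rewrite mxE.
Qed.

Lemma fcalc_diag_expR_affine U lam (beta a b : R) i :
  fcalc U (fun k => a * lam k + b) (fun t => expR (beta * t)) i i =
  expR (beta * b) * fcalc U lam (fun t => expR (beta * a * t)) i i.
Proof.
rewrite !fcalc_diag mulr_sumr; apply: eq_bigr => k _.
by rewrite mulrDr expRD mulrA mulrC; congr (_ * _); rewrite mulrA.
Qed.

Definition mxpow A k := iter k (mulmx A) 1%:M.

Lemma mxpow_spectral A U lam k : spectral_decomp A U lam ->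
  mxpow A k = fcalc U lam (fun t => t ^+ k).
Proof.
move=> [/mulmx1C hU ->]; rewrite /fcalc; elim: k => [|k IH] /=.
  have -> : diag_mx (\row_j lam j ^+ 0) = 1%:M :> 'M[R]_n.
    by apply/matrixP => i j; rewrite !mxE expr0.
  by rewrite mulmx1 (mulmx1C hU).
rewrite /mxpow /= -/(mxpow _ k) IH -!mulmxA; congr (_ *m _).
rewrite !mulmxA -[_ *m U^T *m U]mulmxA hU mulmx1 mulmx_diag.
by congr (diag_mx _ *m _); apply/rowP => j; rewrite !mxE exprS.
Qed.

Lemma mxpow_le A B : (forall i j, 0 <= B i j <= A i j) ->
  forall k i j, 0 <= mxpow B k i j <= mxpow A k i j.
Proof.
move=> hAB; elim => [|k IH] i j /=; first by rewrite !mxE lexx andbT ler0n.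
rewrite !mxE; apply/andP; split.
  by apply: sumr_ge0 => l _; apply: mulr_ge0; [case/andP: (hAB i l)|case/andP: (IH l j)].
apply: ler_sum => l _; case/andP: (hAB i l) => h1 h2; case/andP: (IH l j) => h3 h4.
exact: ler_pM.
Qed.

Lemma fcalc_expR_cvg A U lam (beta : R) i : spectral_decomp A U lam ->
  series (fun m => beta ^+ m / m`!%:R * mxpow A m i i) @ \oo -->
  fcalc U lam (fun t => expR (beta * t)) i i.
Proof.
move=> hA; rewrite fcalc_diag.
have -> : series (fun m => beta ^+ m / m`!%:R * mxpow A m i i) =
          fun N => \sum_k U i k ^+ 2 * series (exp_coeff (beta * lam k)) N.
  apply/funext => N; rewrite /series /=.
  under eq_bigr => m _ do rewrite (mxpow_spectral _ hA) fcalc_diag big_distrr.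
  rewrite exchange_big /=; apply: eq_bigr => k _; rewrite big_distrr /=.
  by apply: eq_bigr => m _; rewrite /exp_coeff /= exprMn; ring.
apply: (cvg_big (op := +%R) (x0 := 0) (P := xpredT)) => //; first exact: add_continuous.
by move=> k _; apply: cvgMl_tmp; exact: is_cvg_series_exp_coeff.
Qed.

(* Entrywise domination of nonnegative matrices propagates to every power, hence
   to every Taylor coefficient of the exponential. *)
Lemma fcalc_expR_le A B UA UB la lb (beta : R) i : 0 <= beta ->
  spectral_decomp A UA la -> spectral_decomp B UB lb ->
  (forall i j, 0 <= B i j <= A i j) ->
  fcalc UB lb (fun t => expR (beta * t)) i i <= fcalc UA la (fun t => expR (beta * t)) i i.
Proof.
move=> hb hA hB hBA; rewrite -subr_le0.
apply: (cvgr_to_le (cvgB (fcalc_expR_cvg (beta := beta) (i := i) hB)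
                         (fcalc_expR_cvg (beta := beta) (i := i) hA))).
near=> N; rewrite subr_le0; apply: ler_sum => m _.
apply: ler_wpM2l; first by rewrite divr_ge0 ?exprn_ge0.
by case/andP: (mxpow_le hBA m i i).
Unshelve. all: by end_near.
Qed.

Lemma quad_form_le_rowsum (T : 'M[R]_n) (c : R) (u : 'I_n -> R) :
  (forall i j, 0 <= T i j) -> (forall i j, T i j = T j i) ->
  (forall i, \sum_j T i j <= c) ->
  \sum_i \sum_j u i * T i j * u j <= c * \sum_i u i ^+ 2.
Proof.
move=> T_ge0 TC rowsum.
have amgm i j : u i * T i j * u j <= T i j * u i ^+ 2 / 2 + T i j * u j ^+ 2 / 2.
  rewrite -subr_ge0.
  have -> : T i j * u i ^+ 2 / 2 + T i j * u j ^+ 2 / 2 - u i * T i j * u j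
            = T i j * (u i - u j) ^+ 2 / 2 by field.
  by rewrite divr_ge0 // mulr_ge0 ?sqr_ge0.
apply: le_trans (ler_sum _ (fun i _ => ler_sum _ (fun j _ => amgm i j))) _.
have half_sym : \sum_i \sum_j T i j * u j ^+ 2 / 2 = \sum_i \sum_j T i j * u i ^+ 2 / 2.
  by rewrite exchange_big /=; apply: eq_bigr => i _; apply: eq_bigr => j _; rewrite TC.
under eq_bigr do rewrite big_split /=.
rewrite big_split /= half_sym.
have -> : \sum_i \sum_j T i j * u i ^+ 2 / 2 = (\sum_i u i ^+ 2 * \sum_j T i j) / 2.
  rewrite mulr_suml; apply: eq_bigr => i _; rewrite mulr_sumr mulr_suml.
  by apply: eq_bigr => j _; ring.
have : \sum_i u i ^+ 2 * \sum_j T i j <= c * \sum_i u i ^+ 2.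
  by rewrite mulr_sumr; apply: ler_sum => i _; rewrite mulrC ler_wpM2r ?sqr_ge0.
lra.
Qed.

End FunctionalCalculus.

Lemma cdistC L (a b : 'I_L) : cdist a b = cdist b a.
Proof. by rewrite /cdist; case: (leqP a b); case: (leqP b a); lia. Qed.

Lemma cdist_eq0 L (a b : 'I_L) : cdist a b = 0%N -> a = b.
Proof.
have ha := ltn_ord a; have hb := ltn_ord b.
by rewrite /cdist => h; apply: val_inj => /=; move: h; case: (leqP a b); lia.
Qed.

Lemma cdist_eq1 L (a b : 'I_L) : cdist a b = 1%N -> b = ordS a \/ b = ord_pred a.
Proof.
have ha := ltn_ord a; have hb := ltn_ord b.
rewrite /cdist => h.
have : [\/ (b : nat) = a.+1, (a : nat) = 0%N /\ (b : nat) = L.-1,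
           (b.+1 = a)%N | (a : nat) = L.-1 /\ (b : nat) = 0%N].
  move: h; case: (leqP a b) => hab h.
  - have : ((b - a)%N == 1%N) || ((L - (b - a))%N == 1%N) by apply/orP; lia.
    by case/orP => /eqP h'; [apply: Or41|apply: Or42]; lia.
  - have : ((a - b)%N == 1%N) || ((L - (a - b))%N == 1%N) by apply/orP; lia.
    by case/orP => /eqP h'; [apply: Or43|apply: Or44]; lia.
case=> [h1|[h1 h2]|h1|[h1 h2]].
- by left; apply: val_inj => /=; rewrite h1 modn_small //; lia.
- by right; apply: val_inj => /=; rewrite h1 h2 add0n modn_small //; lia.
- right; apply: val_inj => /=.
  have -> : ((a + L).-1 = b + L)%N by lia.
  by rewrite modnDr modn_small.
- left; apply: val_inj => /=; rewrite h1 h2.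
  have -> : L.-1.+1 = L by lia.
  by rewrite modnn.
Qed.

Lemma l1distC d L (x y : site d L) : l1dist x y = l1dist y x.
Proof. by rewrite /l1dist; apply: eq_bigr => k _; rewrite cdistC. Qed.

Definition nbr d L (x : site d L) (p : 'I_d * bool) : site d L :=
  [ffun j => if j == p.1 then (if p.2 then ordS (x j) else ord_pred (x j)) else x j].

Lemma l1dist_eq1_nbr d L (x y : site d L) : l1dist x y = 1%N -> y \in codom (nbr x).
Proof.
rewrite /l1dist => h.
case: (pickP (fun k => cdist (x k) (y k) != 0%N)) => [k hk|h0]; last first.
  by move: h; rewrite big1 // => k _; move: (h0 k) => /negbFE/eqP.
move: h; rewrite (bigD1 k) //= => h.
have {}h : (cdist (x k) (y k) + \sum_(i < d | i != k) cdist (x i) (y i))%N = 1%N by [].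
have hk1 : cdist (x k) (y k) = 1%N by move: hk; rewrite -lt0n => hk; lia.
have /forallP hr : [forall (i | i != k), cdist (x i) (y i) == 0%N].
  by rewrite -sum_nat_eq0; apply/eqP; move: h; rewrite hk1 add1n => -[].
have agree j : j != k -> y j = x j.
  by move=> hjk; apply/esym/cdist_eq0; move: (hr j); rewrite hjk => /eqP.
apply/codomP; case: (cdist_eq1 hk1) => hy; [exists (k, true)|exists (k, false)];
  by apply/ffunP => j; rewrite ffunE /=; case: eqP => [->|/eqP /agree].
Qed.

Lemma card_l1dist_eq1 d L (x : site d L) : (#|[pred y | l1dist x y == 1%N]| <= 2 * d)%N.
Proof.
apply: (@leq_trans #|[pred y in codom (nbr x)]|).
  by apply: subset_leq_card; apply/fintype.subsetP => y; rewrite inE => /eqP /l1dist_eq1_nbr.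
apply: (leq_trans (card_size (codom (nbr x)))).
by rewrite size_codom card_prod card_ord card_bool mulnC.
Qed.

Lemma Tmat_rowsum_le (R : realType) d L (x : site d L) : \sum_y Tmat R x y <= (2 * d)%:R.
Proof.
have -> : \sum_y Tmat R x y = (#|[pred y | l1dist x y == 1%N]|)%:R.
  by rewrite /Tmat -big_mkcond /= sumr_const.
by rewrite ler_nat card_l1dist_eq1.
Qed.

Section Restriction.
Variables (R : realType) (d L : nat) (Om : {set site d L}).

Definition TOm : 'M[R]_#|Om| := \matrix_(i, j) Tmat R (Osite i) (Osite j).

Lemma Osite_eq (i j : 'I_#|Om|) : (Osite i == Osite j) = (i == j).
Proof. exact: (inj_eq enum_val_inj). Qed.

Lemma Osite_in (i : 'I_#|Om|) : Osite i \in Om.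
Proof. exact: enum_valP. Qed.

Lemma TOm_ge0 i j : 0 <= TOm i j.
Proof. by rewrite mxE /Tmat; case: ifP. Qed.

Lemma TOmC i j : TOm i j = TOm j i.
Proof. by rewrite !mxE /Tmat l1distC. Qed.

Lemma TOm_rowsum_le i : \sum_j TOm i j <= (2 * d)%:R.
Proof.
apply: le_trans (Tmat_rowsum_le R (Osite i)).
under eq_bigr do rewrite mxE.
rewrite -(big_enum_val (A := mem Om) (fun y => Tmat R (Osite i) y)) /=.
rewrite [X in _ <= X](bigID (mem Om)) /= lerDl.
by apply: sumr_ge0 => y _; rewrite /Tmat; case: ifP.
Qed.

Lemma HOm_entry (V : site d L -> R) i j :
  HOm Om V i j = - TOm i j + ((2 * d)%:R - V (Osite i)) * (i == j)%:R.
Proof.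
rewrite /HOm !mxE /Lap Osite_eq.
by case: eqP => [->|_] /=; rewrite ?mulr1n ?mulr0n; ring.
Qed.

(* [-Delta_Omega >= 0] because the row sums of the hopping matrix are at most [2d]. *)
Lemma HOm_eigval_ge (V : site d L -> R) (mu : R) U lam :
  (forall x, x \in Om -> V x <= mu) ->
  spectral_decomp (HOm Om V) U lam -> forall k, - mu <= lam k.
Proof.
move=> hV; apply: spectral_eigval_ge => u.
have hT := quad_form_le_rowsum u TOm_ge0 TOmC TOm_rowsum_le.
have hVu : \sum_i V (Osite i) * u i ^+ 2 <= mu * \sum_i u i ^+ 2.
  by rewrite mulr_sumr; apply: ler_sum => i _; rewrite ler_wpM2r ?sqr_ge0 ?hV ?Osite_in.
suff -> : \sum_i \sum_j u i * HOm Om V i j * u j =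
  (2 * d)%:R * \sum_i u i ^+ 2 - \sum_i V (Osite i) * u i ^+ 2 -
  \sum_i \sum_j u i * TOm i j * u j by lra.
rewrite mulr_sumr -!sumrB; apply: eq_bigr => i _.
under eq_bigr do rewrite HOm_entry mulrDr mulrDl mulrN mulNr.
rewrite big_split /= sumrN [X in _ + X](bigD1 i) //= [X in _ + (_ + X)]big1 => [|j ij]; last first.
  by rewrite eq_sym (negbTE ij) !mulr0 mul0r.
by rewrite eqxx mulr1n; ring.
Qed.

Lemma LapOm_shift_le_HOm (V : site d L -> R) (s : R) :
  0 <= s -> (forall x, x \in Om -> s <= V x) -> forall i j,
  0 <= (LapOm R Om + (s + (2 * d)%:R)%:M) i j <= (- HOm Om V + (2 * d)%:R%:M) i j.
Proof.
move=> s_ge0 hV i j; rewrite !mxE /Lap Osite_eq.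
have := TOm_ge0 i j; rewrite mxE; have := hV _ (Osite_in i).
by case: eqP => [->|_] /=; rewrite ?mulr1n ?mulr0n => *; apply/andP; split; lra.
Qed.

Lemma fcalc_expR_LapOm_le_HOm (V : site d L -> R) (s beta : R) U1 lam1 U2 lam2 i :
  0 <= s -> (forall x, x \in Om -> s <= V x) -> 0 <= beta ->
  spectral_decomp (HOm Om V) U1 lam1 -> spectral_decomp (LapOm R Om) U2 lam2 ->
  expR (beta * s) * fcalc U2 lam2 (fun t => expR (beta * t)) i i <=
  fcalc U1 lam1 (fun t => expR (- beta * t)) i i.
Proof.
move=> s_ge0 hV hb h1 h2; pose c : R := (2 * d)%:R.
have := spectral_decomp_affine (-1) c h1; rewrite scaleN1r => hA.
have := spectral_decomp_affine 1 (s + c) h2; rewrite scale1r => hB.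
have := fcalc_expR_le i hb hA hB (LapOm_shift_le_HOm s_ge0 hV).
rewrite (fcalc_diag_expR_affine U2 lam2 beta 1 (s + c)).
rewrite (fcalc_diag_expR_affine U1 lam1 beta (-1) c) mulr1 mulrN1 mulrDr expRD.
by rewrite -mulrA mulrCA ler_pM2l ?expR_gt0.
Qed.

End Restriction.

Lemma ind_neg_ge_expR (R : realType) (beta mu t : R) : 0 <= beta -> - mu <= t ->
  expR (- (beta * mu)) * expR (- beta * t) - expR (- (beta * mu)) <= ind_neg t.
Proof.
move=> hb ht; have e_gt0 := expR_gt0 (- (beta * mu)).
rewrite /ind_neg; case: ifP => [_|/negbT]; rewrite ?subr_le0.
- suff : expR (- (beta * mu)) * expR (- beta * t) <= 1 by lra.
  rewrite -expRD expR_le1 mulNr -opprD oppr_le0 -mulrDr mulr_ge0 //; lra.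
- rewrite -leNgt => t_ge0; rewrite ger_pMr // expR_le1 mulNr oppr_le0.
  exact: mulr_ge0.
Qed.

Theorem mainTheorem8 (R : realType) (d L : nat) (mu : R)
  (Om : {set site d L}) (V : site d L -> R)
  (hmu : 0 < mu)
  (hV : forall x, x \in Om -> mu / 2 <= V x <= mu)
  (U1 : 'M[R]_#|Om|) (lam1 : 'I_#|Om| -> R)
  (h1 : spectral_decomp (HOm Om V) U1 lam1)
  (U2 : 'M[R]_#|Om|) (lam2 : 'I_#|Om| -> R)
  (h2 : spectral_decomp (LapOm R Om) U2 lam2) :
  forall (i : 'I_#|Om|) (beta : R), 0 < beta ->
    let chi := fcalc U1 lam1 (@ind_neg R) in
    let eDelta := fcalc U2 lam2 (fun t => expR (beta * t)) in
    expR (- (beta * mu / 2)) * (eDelta i i - expR (- (beta * mu / 2))) <= chi i i.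
Proof.
move=> i beta /ltW hb /=.
set chi := fcalc U1 lam1 _; set eDelta := fcalc U2 lam2 _.
set expH := fcalc U1 lam1 (fun t => expR (- beta * t)) i i.
have lam1_ge k : - mu <= lam1 k.
  by apply: HOm_eigval_ge h1 k => x /hV /andP[].
have chi_ge : expR (- (beta * mu)) * expH - expR (- (beta * mu)) <= chi i i.
  rewrite -fcalc_diag_affine; last by case: h1.
  apply: fcalc_diag_le => k; exact: ind_neg_ge_expR hb (lam1_ge k).
have expH_ge : expR (beta * (mu / 2)) * eDelta i i <= expH.
  apply: fcalc_expR_LapOm_le_HOm hb h1 h2 => [|x /hV /andP[]//]; lra.
have := ler_wpM2l (expR_ge0 (- (beta * mu))) expH_ge.
rewrite (mulrA (expR _)) mulrBr -!expRD.
have -> : - (beta * mu) + beta * (mu / 2) = - (beta * mu / 2) by field.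
have -> : - (beta * mu / 2) + - (beta * mu / 2) = - (beta * mu) by field.
lra.
Qed.
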